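(* For a matrix $A\in SL_2\mathcal{V}$, the following are equivalent: (1) $A\neq1$ and $(A-1)^2=0$; (2) $A$ is conjugate (in $SL_2\mathcal{V}$) to $P_0=\begin{pmatrix}1&1\\0&1\end{pmatrix}$; (3) $A=\begin{pmatrix}1-ac^*&aa^*\\-cc^*&1+ca^*\end{pmatrix}$ for some $(a,c)\in S\mathbb{H}$.
   Context: For $q=a+bi+cj+dk\in\mathbb{H}$, $q^*=a+bi+cj-dk$, $\bar q=a-bi-cj-dk$. $\mathcal{V}=\mathrm{span}_\mathbb{R}\{1,i,j\}$. $S\mathbb{H}=\{(\xi,\eta)\in\mathbb{H}^2\setminus\{(0,0)\}:\xi\bar\eta\in\mathcal{V}\}$. $SL_2\mathcal{V}$ is the group of quaternionic matrices $\begin{pmatrix}a&b\\c&d\end{pmatrix}$ with $ab^*,cd^*,c^*a,d^*b,ba^*,dc^*,a^*c,b^*d\in\mathcal{V}$ and $ad^*-bc^*=da^*-cb^*=d^*a-b^*c=a^*d-c^*b=1$. *)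

From HB Require Import structures.
From mathcomp Require Import all_boot all_order all_algebra.
From mathcomp Require Import reals.
Set Implicit Arguments. Unset Strict Implicit. Unset Printing Implicit Defensive.
Import Order.TTheory GRing.Theory Num.Theory.
Local Open Scope ring_scope.

Section Quat.
Variable R : realType.

(* q = a + b i + c j + d k *)
Record quat := Quat { qa : R; qb : R; qc : R; qd : R }.

Definition q0 : quat := Quat 0 0 0 0.
Definition q1 : quat := Quat 1 0 0 0.
Definition qadd (p q : quat) : quat :=
  Quat (qa p + qa q) (qb p + qb q) (qc p + qc q) (qd p + qd q).
Definition qopp (p : quat) : quat := Quat (- qa p) (- qb p) (- qc p) (- qd p).
Definition qsub (p q : quat) : quat := qadd p (qopp q).
(* Hamilton product, i^2 = j^2 = k^2 = ijk = -1 *)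
Definition qmul (p q : quat) : quat :=
  Quat (qa p * qa q - qb p * qb q - qc p * qc q - qd p * qd q)
       (qa p * qb q + qb p * qa q + qc p * qd q - qd p * qc q)
       (qa p * qc q - qb p * qd q + qc p * qa q + qd p * qb q)
       (qa p * qd q + qb p * qc q - qc p * qb q + qd p * qa q).
Definition qconj (q : quat) : quat := Quat (qa q) (- qb q) (- qc q) (- qd q).
Definition qstar (q : quat) : quat := Quat (qa q) (qb q) (qc q) (- qd q).

Definition inV (q : quat) : Prop := qd q = 0.

Definition inSH (xi eta : quat) : Prop :=
  ~ (xi = q0 /\ eta = q0) /\ inV (qmul xi (qconj eta)).

Record mat2 := Mat2 { m11 : quat; m12 : quat; m21 : quat; m22 : quat }.

Definition mone : mat2 := Mat2 q1 q0 q0 q1.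
Definition mzero : mat2 := Mat2 q0 q0 q0 q0.
Definition msub (A B : mat2) : mat2 :=
  Mat2 (qsub (m11 A) (m11 B)) (qsub (m12 A) (m12 B))
       (qsub (m21 A) (m21 B)) (qsub (m22 A) (m22 B)).
Definition mmul (A B : mat2) : mat2 :=
  Mat2 (qadd (qmul (m11 A) (m11 B)) (qmul (m12 A) (m21 B)))
       (qadd (qmul (m11 A) (m12 B)) (qmul (m12 A) (m22 B)))
       (qadd (qmul (m21 A) (m11 B)) (qmul (m22 A) (m21 B)))
       (qadd (qmul (m21 A) (m12 B)) (qmul (m22 A) (m22 B))).

Definition inSL2V (M : mat2) : Prop :=
  let a := m11 M in let b := m12 M in let c := m21 M in let d := m22 M in
  (inV (qmul a (qstar b)) /\ inV (qmul c (qstar d)) /\ inV (qmul (qstar c) a) /\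
   inV (qmul (qstar d) b) /\ inV (qmul b (qstar a)) /\ inV (qmul d (qstar c)) /\
   inV (qmul (qstar a) c) /\ inV (qmul (qstar b) d)) /\
  (qsub (qmul a (qstar d)) (qmul b (qstar c)) = q1 /\
   qsub (qmul d (qstar a)) (qmul c (qstar b)) = q1 /\
   qsub (qmul (qstar d) a) (qmul (qstar b) c) = q1 /\
   qsub (qmul (qstar a) d) (qmul (qstar c) b) = q1).

Definition P0 : mat2 := Mat2 q1 q1 q0 q1.

Definition conj_SL2V (A B : mat2) : Prop :=
  exists G Ginv : mat2, [/\ inSL2V G, mmul G Ginv = mone, mmul Ginv G = mone &
                          A = mmul (mmul G B) Ginv].

End Quat.

From mathcomp Require Import all_boot all_order all_algebra.
From mathcomp Require Import reals ring lra.
Set Implicit Arguments. Unset Strict Implicit. Unset Printing Implicit Defensive.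
Import Order.TTheory GRing.Theory Num.Theory.
Local Open Scope ring_scope.

(* Every G in SL_2 V has the inverse [[d^*, -b^*], [-c^*, a^*]], and G P0 G^-1 is
   the matrix of (3) built from the first column (a, c) of G.  These first columns
   are exactly the pairs of SH: (a, c) is completed by the column
   t [-\bar c^*; \bar a^*] with t = 1 / (|a|^2 + |c|^2).  This gives (2) <-> (3),
   and (2) -> (1) holds for any conjugate of P0.
   For (1) -> (3), (A - 1)^2 = 0 together with A^-1 A = 1 forces A - 1 = 1 - A^-1,
   so A - 1 = [[x, b], [c, -x^*]] with b, c in V, x^2 = -bc and xb = bx^*.  Every
   element of V is of the form a a^*; writing b = a a^* and c' = -(a^-1 x)^*
   gives the pair (a, c').  When b = 0, x = 0 and the pair is (0, c') with
   c' c'^* = -c. *)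

Section UnipotentSL2V.
Variable R : realType.
Implicit Types (t : R) (p q r u v w x a b c : quat R) (M N T G Gi : mat2 R).

Lemma quatP p q :
  p = q <-> [/\ qa p = qa q, qb p = qb q, qc p = qc q & qd p = qd q].
Proof.
split=> [-> //|]; case: p => ????; case: q => ????.
by case=> /= -> -> -> ->.
Qed.

Ltac quat_ext := apply/quatP; split=> /=.

Lemma qmulA p q r : qmul p (qmul q r) = qmul (qmul p q) r.
Proof. quat_ext; ring. Qed.

Lemma qmul1l p : qmul (q1 R) p = p.
Proof. quat_ext; ring. Qed.

Lemma qmul1r p : qmul p (q1 R) = p.
Proof. quat_ext; ring. Qed.

Lemma qmul0l p : qmul (q0 R) p = q0 R.
Proof. quat_ext; ring. Qed.

Lemma qmulNl p q : qmul (qopp p) q = qopp (qmul p q).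
Proof. quat_ext; ring. Qed.

Lemma qmulNr p q : qmul p (qopp q) = qopp (qmul p q).
Proof. quat_ext; ring. Qed.

Lemma qoppK p : qopp (qopp p) = p.
Proof. quat_ext; ring. Qed.

Lemma qaddr_eq0 p q : qadd p q = q0 R -> p = qopp q.
Proof. move/quatP=> /= [? ? ? ?]; quat_ext; lra. Qed.

Lemma qsubr_eq0 p q : qsub p q = q0 R -> p = q.
Proof. by move/qaddr_eq0; rewrite qoppK. Qed.

Lemma qstarM p q : qstar (qmul p q) = qmul (qstar q) (qstar p).
Proof. quat_ext; ring. Qed.

Lemma qstarK p : qstar (qstar p) = p.
Proof. quat_ext; ring. Qed.

Lemma qstarN p : qstar (qopp p) = qopp (qstar p).
Proof. quat_ext; ring. Qed.

Lemma qstar1 : qstar (q1 R) = q1 R.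
Proof. by quat_ext; rewrite ?oppr0. Qed.

Lemma qstar_inV v : inV v -> qstar v = v.
Proof. by rewrite /inV => hv; quat_ext; rewrite ?hv ?oppr0. Qed.

Lemma inVN v : inV v -> inV (qopp v).
Proof. by rewrite /inV /= => ->; rewrite oppr0. Qed.

Lemma inV_conj p v : inV v -> inV (qmul (qmul p v) (qstar p)).
Proof. by case: v => ????; rewrite /inV /= => ->; ring. Qed.

Lemma qd_mul_conj u w : qd (qmul u (qconj w)) = qd (qmul (qstar w) u).
Proof. rewrite /=; ring. Qed.

Definition qnorm p := qa p ^+ 2 + qb p ^+ 2 + qc p ^+ 2 + qd p ^+ 2.

Lemma qnorm_ge0 p : 0 <= qnorm p.
Proof. by rewrite /qnorm !addr_ge0 ?sqr_ge0. Qed.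

Lemma qnorm_eq0 p : qnorm p = 0 -> p = q0 R.
Proof.
rewrite /qnorm => hp.
have := (sqr_ge0 (qa p), sqr_ge0 (qb p), sqr_ge0 (qc p), sqr_ge0 (qd p)).
case=> -[[? ?] ?] ?.
by quat_ext; apply/eqP; rewrite -sqrf_eq0; apply/eqP; lra.
Qed.

Lemma qnorm_mul p q : qnorm (qmul p q) = qnorm p * qnorm q.
Proof. rewrite /qnorm /=; ring. Qed.

Lemma quat_eq0VN p : p = q0 R \/ p <> q0 R.
Proof.
have [/qnorm_eq0|hp] := eqVneq (qnorm p) 0; first by left.
by right=> p0; move: hp; rewrite p0 /qnorm /= expr0n /= !addr0 eqxx.
Qed.

Lemma qmul_eq0 p q : qmul p q = q0 R -> p = q0 R \/ q = q0 R.
Proof.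
move=> /(congr1 qnorm); rewrite qnorm_mul /qnorm /= expr0n /= !addr0.
by move/eqP; rewrite mulf_eq0 => /orP[] /eqP /qnorm_eq0; [left|right].
Qed.

Definition qinv p :=
  Quat (qa p / qnorm p) (- qb p / qnorm p) (- qc p / qnorm p) (- qd p / qnorm p).

Lemma qmulrV p : p <> q0 R -> qmul p (qinv p) = q1 R.
Proof.
move=> p0; have hp : qnorm p != 0 by apply/eqP=> /qnorm_eq0.
by quat_ext; rewrite /qnorm in hp *; field.
Qed.

Lemma qmulVr p : p <> q0 R -> qmul (qinv p) p = q1 R.
Proof.
move=> p0; have hp : qnorm p != 0 by apply/eqP=> /qnorm_eq0.
by quat_ext; rewrite /qnorm in hp *; field.
Qed.

Lemma qmulI p q r : p <> q0 R -> qmul p q = qmul p r -> q = r.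
Proof. by move=> p0 e; rewrite -[q]qmul1l -[r]qmul1l -(qmulVr p0) -!qmulA e. Qed.

Lemma inV_mul_star v : inV v -> exists a, qmul a (qstar a) = v.
Proof.
case: v => v0 v1 v2 v3; rewrite /inV /= => ->.
(* For a in span {1, i, j}, a a^* = a^2: take the complex square root of
   v0 + (v1 i + v2 j) in the plane it spans. *)
pose r := Num.sqrt (v0 ^+ 2 + v1 ^+ 2 + v2 ^+ 2).
have hr2 : r ^+ 2 = v0 ^+ 2 + v1 ^+ 2 + v2 ^+ 2.
  by rewrite sqr_sqrtr // !addr_ge0 ?sqr_ge0.
have hr0 : 0 <= r by rewrite sqrtr_ge0.
have [h1 h2] := (sqr_ge0 v1, sqr_ge0 v2).
have : 0 <= r + v0 by nra.
rewrite le_eqVlt => /predU1P[hz|hp].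
  have e1 : v1 = 0 by apply/eqP; rewrite -sqrf_eq0; apply/eqP; nra.
  have e2 : v2 = 0 by apply/eqP; rewrite -sqrf_eq0; apply/eqP; nra.
  have hs : Num.sqrt (- v0) ^+ 2 = - v0 by rewrite sqr_sqrtr //; nra.
  by exists (Quat 0 (Num.sqrt (- v0)) 0 0); quat_ext; rewrite ?e1 ?e2; nra.
pose s := Num.sqrt ((r + v0) / 2).
have hs2 : s ^+ 2 = (r + v0) / 2 by rewrite sqr_sqrtr //; lra.
have hs0 : s != 0 by apply/eqP => s0; move: hs2; rewrite s0; lra.
exists (Quat s (v1 / (2 * s)) (v2 / (2 * s)) 0); quat_ext; [|by field..|ring].
have e : 4 * s ^+ 4 - v1 ^+ 2 - v2 ^+ 2 = 4 * s ^+ 2 * v0.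
  by rewrite (_ : s ^+ 4 = (s ^+ 2) ^+ 2) -?exprM // hs2; nra.
transitivity ((4 * s ^+ 4 - v1 ^+ 2 - v2 ^+ 2) / (4 * s ^+ 2)); first by field.
by rewrite e; field.
Qed.

Lemma matP M N :
  M = N <-> [/\ m11 M = m11 N, m12 M = m12 N, m21 M = m21 N & m22 M = m22 N].
Proof.
split=> [-> //|]; case: M => ????; case: N => ????.
by case=> /= -> -> -> ->.
Qed.

Ltac mat_ext := apply/matP; split; quat_ext.

Lemma mmulA M N T : mmul M (mmul N T) = mmul (mmul M N) T.
Proof. mat_ext; ring. Qed.

Lemma mmul1l M : mmul (mone R) M = M.
Proof. mat_ext; ring. Qed.

Lemma mmul1r M : mmul M (mone R) = M.
Proof. mat_ext; ring. Qed.

Lemma mmul0l M : mmul (mzero R) M = mzero R.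
Proof. mat_ext; ring. Qed.

Lemma mmul0r M : mmul M (mzero R) = mzero R.
Proof. mat_ext; ring. Qed.

Lemma mmulBl M N T : mmul (msub M N) T = msub (mmul M T) (mmul N T).
Proof. mat_ext; ring. Qed.

Lemma mmulBr M N T : mmul M (msub N T) = msub (mmul M N) (mmul M T).
Proof. mat_ext; ring. Qed.

Lemma msubr_eq0 M N : msub M N = mzero R -> M = N.
Proof.
case: M N => ???? [????].
by case/matP=> /= /qsubr_eq0 -> /qsubr_eq0 -> /qsubr_eq0 -> /qsubr_eq0 ->.
Qed.

Lemma mconj_sub1 G Gi M : mmul G Gi = mone R ->
  msub (mmul (mmul G M) Gi) (mone R) = mmul (mmul G (msub M (mone R))) Gi.
Proof. by move=> hG; rewrite mmulBr mmulBl mmul1r hG. Qed.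

Lemma mconj_mul G Gi M N : mmul Gi G = mone R ->
  mmul (mmul (mmul G M) Gi) (mmul (mmul G N) Gi) = mmul (mmul G (mmul M N)) Gi.
Proof. by move=> hG; rewrite !mmulA -(mmulA _ Gi G) hG mmul1r. Qed.

Lemma mconj_eq1 G Gi M : mmul Gi G = mone R ->
  mmul (mmul G M) Gi = mone R -> M = mone R.
Proof.
move=> hG hM.
have <- : mmul Gi (mmul (mmul (mmul G M) Gi) G) = M.
  by rewrite !mmulA hG mmul1l -mmulA hG mmul1r.
by rewrite hM mmul1l hG.
Qed.

Lemma sqr0_sub1_eq M T : mmul T M = mone R ->
  mmul (msub M (mone R)) (msub M (mone R)) = mzero R ->
  msub M (mone R) = msub (mone R) T.
Proof.
move=> hTM hM; apply: msubr_eq0.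
have hT : mmul T (msub M (mone R)) = msub (mone R) T by rewrite mmulBr hTM mmul1r.
by rewrite -[X in msub X _]mmul1l -hT -mmulBl -hT -mmulA hM mmul0r.
Qed.

Definition unipotent_mx a c : mat2 R :=
  Mat2 (qsub (q1 R) (qmul a (qstar c))) (qmul a (qstar a))
       (qopp (qmul c (qstar c))) (qadd (q1 R) (qmul c (qstar a))).

Definition sl2inv G : mat2 R :=
  Mat2 (qstar (m22 G)) (qopp (qstar (m12 G))) (qopp (qstar (m21 G))) (qstar (m11 G)).

(* In coordinates, the identities below are linear combinations of the
   defining equations of SL_2 V, so lra proves them. *)
Ltac SL2V_coords G :=
  case: G => [[? ? ? ?] [? ? ? ?] [? ? ? ?] [? ? ? ?]];
  rewrite /inSL2V /inV /= => -[[? [? [? [? [? [? [? ?]]]]]]]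
    [[= ? ? ? ?] [[= ? ? ? ?] [[= ? ? ? ?] [= ? ? ? ?]]]]].

Lemma mmulVr_SL2V G : inSL2V G -> mmul (sl2inv G) G = mone R.
Proof. by SL2V_coords G; mat_ext; lra. Qed.

Lemma mmulrV_SL2V G : inSL2V G -> mmul G (sl2inv G) = mone R.
Proof. by SL2V_coords G; mat_ext; lra. Qed.

Lemma SL2V_conj_P0 G :
  inSL2V G -> mmul (mmul G (P0 R)) (sl2inv G) = unipotent_mx (m11 G) (m21 G).
Proof. by SL2V_coords G; mat_ext; lra. Qed.

Lemma SL2V_col1_SH G : inSL2V G -> inSH (m11 G) (m21 G).
Proof.
SL2V_coords G; split; last by rewrite /inV /=; lra.
by case=> [[= ? ? ? ?] [= ? ? ? ?]]; subst; lra.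
Qed.

Definition qscale t p := Quat (t * qa p) (t * qb p) (t * qc p) (t * qd p).

Lemma SH_col1_SL2V a c : inSH a c -> exists G, [/\ inSL2V G, m11 G = a & m21 G = c].
Proof.
case=> ac0 hac.
have hn : qnorm a + qnorm c != 0.
  apply/negP; rewrite paddr_eq0 ?qnorm_ge0 //.
  by case/andP=> /eqP/qnorm_eq0 a0 /eqP/qnorm_eq0 c0; apply: ac0.
set t := (qnorm a + qnorm c)^-1.
have ht : t * (qnorm a + qnorm c) = 1 by rewrite mulVf.
exists (Mat2 a (qscale (- t) (qconj (qstar c))) c (qscale t (qconj (qstar a)))).
(* The V-conditions on G are the SH condition scaled by t or t^2. *)
have [h1 h2] : t * qd (qmul a (qconj c)) = 0 /\ t * (t * qd (qmul a (qconj c))) = 0.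
  by rewrite [qd _]hac !mulr0.
split=> //; move: ht hac h1 h2; rewrite /inSL2V /inV /qnorm /= => ht hac h1 h2.
by do !split; try quat_ext; lra.
Qed.

Lemma unipotent_mx_conj_P0 a c : inSH a c -> conj_SL2V (unipotent_mx a c) (P0 R).
Proof.
case/SH_col1_SL2V=> G [hG <- <-].
exists G, (sl2inv G); split=> //; [exact: mmulrV_SL2V | exact: mmulVr_SL2V |].
by rewrite SL2V_conj_P0.
Qed.

Lemma conj_P0_unipotent_mx A :
  conj_SL2V A (P0 R) -> exists a c, inSH a c /\ A = unipotent_mx a c.
Proof.
case=> G [Gi [hG hGGi _ ->]].
have -> : Gi = sl2inv G.
  by rewrite -[Gi]mmul1l -(mmulVr_SL2V hG) -mmulA hGGi mmul1r.
by exists (m11 G), (m21 G); rewrite SL2V_conj_P0 //; split=> //; exact: SL2V_col1_SH.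
Qed.

Lemma P0_sub1_sqr :
  mmul (msub (P0 R) (mone R)) (msub (P0 R) (mone R)) = mzero R.
Proof. mat_ext; ring. Qed.

Lemma conj_P0_sub1_sqr A : conj_SL2V A (P0 R) ->
  A <> mone R /\ mmul (msub A (mone R)) (msub A (mone R)) = mzero R.
Proof.
case=> G [Gi [_ hGGi hGiG ->]]; split.
  move/(mconj_eq1 hGiG)/matP=> [_ /quatP[/= /eqP]].
  by rewrite oner_eq0.
by rewrite mconj_sub1 // mconj_mul // P0_sub1_sqr mmul0r mmul0l.
Qed.

Lemma SH0_factor c : inV c -> c <> q0 R ->
  exists c', inSH (q0 R) c' /\ qmul c' (qstar c') = qopp c.
Proof.
move=> hc c0; have [c' hc'] := inV_mul_star (inVN hc).
exists c'; split=> //; split; last by rewrite /inV /=; ring.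
case=> _ c'0; apply: c0; rewrite -[c]qoppK -hc' c'0.
by quat_ext; ring.
Qed.

Lemma nilpotent_SH_factorN0 x b c : inV b -> b <> q0 R -> inV (qmul x b) ->
  qmul x x = qopp (qmul b c) -> qmul x b = qmul b (qstar x) ->
  exists a' c', [/\ inSH a' c', qmul a' (qstar a') = b,
                   qmul a' (qstar c') = qopp x & qmul c' (qstar c') = qopp c].
Proof.
move=> hb b0 hxbV hxx hxb.
have [a' ha'] := inV_mul_star hb.
have a'0 : a' <> q0 R by move=> a'0; apply: b0; rewrite -ha' a'0 qmul0l.
set p := qinv a'.
have hpa' : qmul p a' = q1 R := qmulVr a'0.
have hsa'p : qmul (qstar a') (qstar p) = q1 R by rewrite -qstarM hpa' qstar1.
set c' := qopp (qstar (qmul p x)).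
have hc's : qstar c' = qopp (qmul p x) by rewrite qstarN qstarK.
have hac' : qmul a' (qstar c') = qopp x by rewrite hc's qmulNr qmulA qmulrV // qmul1l.
exists a', c'; split=> //.
  split; first by case.
  rewrite /inV qd_mul_conj.
  have -> : qmul (qstar c') a' = qopp (qmul (qmul p (qmul x b)) (qstar p)).
    by rewrite hc's qmulNl -ha' !qmulA -(qmulA _ (qstar a')) hsa'p qmul1r.
  exact/inVN/inV_conj.
apply: (qmulI b0); rewrite qmulNr -hxx hc's qmulNr /c' qmulNl qoppK qstarM !qmulA -hxb -ha'.
by rewrite qmulA -(qmulA _ (qstar a')) hsa'p qmul1r -(qmulA x) qmulrV // qmul1r.
Qed.

Lemma nilpotent_SH_factor x b c : inV b -> inV c -> inV (qmul x b) ->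
  qmul x x = qopp (qmul b c) -> qmul x b = qmul b (qstar x) ->
  ~ [/\ x = q0 R, b = q0 R & c = q0 R] ->
  exists a' c', [/\ inSH a' c', qmul a' (qstar a') = b,
                   qmul a' (qstar c') = qopp x & qmul c' (qstar c') = qopp c].
Proof.
move=> hb hc hxbV hxx hxb nz.
have [b0|b0] := quat_eq0VN b; last exact: nilpotent_SH_factorN0.
have x0 : x = q0 R.
  by have /qmul_eq0[] : qmul x x = q0 R by rewrite hxx b0 qmul0l; quat_ext; ring.
have c0 : c <> q0 R by move=> c0; apply: nz.
have [c' [hSH hc']] := SH0_factor hc c0.
by exists (q0 R), c'; rewrite b0 x0 !qmul0l; split=> //; quat_ext; ring.
Qed.

Lemma sqr0_sub1_unipotent_mx A : inSL2V A -> A <> mone R ->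
  mmul (msub A (mone R)) (msub A (mone R)) = mzero R ->
  exists a c, inSH a c /\ A = unipotent_mx a c.
Proof.
move=> hA hA1 hN; have := sqr0_sub1_eq (mmulVr_SL2V hA) hN.
case: A hA hA1 hN => a b c d [[hab _] _] hA1 hN /matP[/= _ e12 e21 e22].
set x := qsub a (q1 R).
have hb : inV b by move/quatP: e12 => /= [_ _ _ ?]; rewrite /inV; lra.
have hc : inV c by move/quatP: e21 => /= [_ _ _ ?]; rewrite /inV; lra.
have hd : d = qsub (q1 R) (qstar x).
  by move/quatP: e22 => /= [? ? ? ?]; quat_ext; lra.
have hxbV : inV (qmul x b).
  by rewrite qstar_inV // in hab; move: hab hb; rewrite /inV /= => hab hb; lra.
have : mmul (Mat2 x b c (qopp (qstar x))) (Mat2 x b c (qopp (qstar x))) = mzero R.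
  by rewrite -hN hd; congr mmul; mat_ext; ring.
case/matP=> /= /qaddr_eq0 hxx /qaddr_eq0; rewrite qmulNr qoppK => hxb _ _.
have nz : ~ [/\ x = q0 R, b = q0 R & c = q0 R].
  by case=> x0 b0 c0; apply: hA1; rewrite hd x0 b0 c0 (qsubr_eq0 x0); mat_ext; ring.
have [a' [c' [hSH ha' hac' hc']]] := nilpotent_SH_factor hb hc hxbV hxx hxb nz.
have hca' : qmul c' (qstar a') = qopp (qstar x) by rewrite -[c']qstarK -qstarM hac' qstarN.
exists a', c'; split=> //; rewrite /unipotent_mx ha' hac' hca' hc' hd /x.
by mat_ext; ring.
Qed.

End UnipotentSL2V.

Theorem lemma3p22 (R : realType) (A : mat2 R) :
  inSL2V A ->
  ((A <> mone R /\ mmul (msub A (mone R)) (msub A (mone R)) = mzero R) <->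
   conj_SL2V A (P0 R)) /\
  (conj_SL2V A (P0 R) <->
   exists a c : quat R, inSH a c /\
     A = Mat2 (qsub (q1 R) (qmul a (qstar c))) (qmul a (qstar a))
              (qopp (qmul c (qstar c))) (qadd (q1 R) (qmul c (qstar a)))).
Proof.
move=> hA; split; split.
- by case=> hA1 hN; have [a [c [hac ->]]] := sqr0_sub1_unipotent_mx hA hA1 hN;
    exact: unipotent_mx_conj_P0.
- exact: conj_P0_sub1_sqr.
- exact: conj_P0_unipotent_mx.
- by case=> a [c [hac ->]]; exact: unipotent_mx_conj_P0.
Qed.
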